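(* Let $\alpha\in(0,1)$, $\tau>0$, $t_m=m\tau$, and let $v=(v^0,v^1,v^2,\dots)$ be any sequence of real numbers. Define $$a_0^{(\alpha)}=\frac{1}{\Gamma(2-\alpha)},\qquad a_k^{(\alpha)}=\frac{1}{\Gamma(2-\alpha)}\big[(k+1)^{1-\alpha}-k^{1-\alpha}\big],\ k\ge1,$$ and, for $n\ge1$, $$\delta_t^{\alpha}v^n=\frac{1}{\tau^{\alpha}}\Big[a_0^{(\alpha)}v^n-\sum_{k=1}^{n-1}\big(a_{n-k-1}^{(\alpha)}-a_{n-k}^{(\alpha)}\big)v^k-a_{n-1}^{(\alpha)}v^0\Big].$$ Then for every integer $m\ge1$, $$\tau\sum_{n=1}^{m}v^n\,\delta_t^{\alpha}v^n\ \ge\ \frac12\,\tau^{1-\alpha}\sum_{n=1}^{m}a_{m-n}^{(\alpha)}(v^n)^2-\frac{t_m^{1-\alpha}}{2\Gamma(2-\alpha)}(v^0)^2 .$$ *)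

From Stdlib Require Import Reals.
From Coquelicot Require Import Coquelicot.
Open Scope R_scope.

Definition Gamma (s : R) : R :=
  RInt_gen (fun t => Rpower t (s - 1) * exp (- t))
           (at_right 0) (Rbar_locally p_infty).

Definition acoef (alpha : R) (k : nat) : R :=
  match k with
  | O => / Gamma (2 - alpha)
  | S _ => / Gamma (2 - alpha) *
           (Rpower (INR k + 1) (1 - alpha) - Rpower (INR k) (1 - alpha))
  end.

(* L1 discrete Caputo derivative delta_t^alpha v^n, for n >= 1.
   sum_n_m f 1 (n-1) is the (possibly empty) sum over k = 1..n-1. *)
Definition L1deriv (alpha tau : R) (v : nat -> R) (n : nat) : R :=
  / Rpower tau alpha *
  (acoef alpha 0 * v n
   - sum_n_m (fun k => (acoef alpha (n - k - 1) - acoef alpha (n - k)) * v k) 1 (n - 1)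
   - acoef alpha (n - 1) * v O).

(* Since the weights [a_k] are nonnegative and nonincreasing (the latter by concavity of
   [x |-> x^(1-alpha)], both needing [Gamma(2-alpha) > 0]), the coefficients
   [a_(n-k-1) - a_(n-k)] of [v^k] in [delta v^n] are nonnegative and sum to [a_0 - a_(n-1)].
   Bounding each cross term by [2 v^n v^k <= (v^n)^2 + (v^k)^2] gives a lower bound for
   [v^n delta v^n] by a diagonal quadratic form; summed over [n <= m], the diagonal
   weights regroup into [a_(m-n)], and [sum_(n<=m) a_(n-1)] telescopes to
   [m^(1-alpha) / Gamma(2-alpha)]. *)

From Stdlib Require Import Reals Lra Lia.
From Coquelicot Require Import Coquelicot.
Open Scope R_scope.

Lemma Rpower_1_l y : Rpower 1 y = 1.
Proof. unfold Rpower. rewrite ln_1, Rmult_0_r. apply exp_0. Qed.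

Lemma sum_n_m_Rplus (f g : nat -> R) n m :
  sum_n_m (fun k => f k + g k) n m = sum_n_m f n m + sum_n_m g n m.
Proof. exact (sum_n_m_plus f g n m). Qed.

Lemma sum_n_m_Rmult_l c (f : nat -> R) n m :
  sum_n_m (fun k => c * f k) n m = c * sum_n_m f n m.
Proof. exact (sum_n_m_mult_l c f n m). Qed.

Lemma sum_n_m_Rext (f g : nat -> R) n m :
  (forall k, f k = g k) -> sum_n_m f n m = sum_n_m g n m.
Proof. apply sum_n_m_ext. Qed.

Lemma sum_n_m_ge0 (f : nat -> R) n m : (forall k, 0 <= f k) -> 0 <= sum_n_m f n m.
Proof.
  intros Hf. change 0 with (zero : R_AbelianMonoid).
  rewrite <- (sum_n_m_const_zero n m). now apply sum_n_m_le.
Qed.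

Lemma sum_n_m_telescope (g : nat -> R) n m : (n <= S m)%nat ->
  sum_n_m (fun k => g (S k) - g k) n m = g (S m) - g n.
Proof.
  induction m as [| m IH]; intros Hn.
  - destruct n as [| [| n]]; [| | lia].
    + rewrite sum_n_n. reflexivity.
    + rewrite sum_n_m_zero by lia. change (0 = g 1%nat - g 1%nat). ring.
  - destruct (Nat.eq_dec n (S (S m))) as [-> | Hn'].
    + rewrite sum_n_m_zero by lia. change (0 = g (S (S m)) - g (S (S m))). ring.
    + rewrite sum_n_Sm, IH by lia.
      change (g (S m) - g n + (g (S (S m)) - g (S m)) = g (S (S m)) - g n). ring.
Qed.

Definition L1diff (a : nat -> R) (n k : nat) : R := a (n - k - 1)%nat - a (n - k)%nat.

Definition L1sum (a v : nat -> R) (n : nat) : R :=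
  a O * v n - sum_n_m (fun k => L1diff a n k * v k) 1 (n - 1) - a (n - 1)%nat * v O.

Section L1Energy.

Variables a v : nat -> R.
Hypothesis a_ge0 : forall k, 0 <= a k.
Hypothesis a_succ_le : forall k, a (S k) <= a k.

Lemma L1diff_ge0 n k : 0 <= L1diff a n k.
Proof.
  unfold L1diff. destruct (n - k)%nat as [| j].
  - simpl; lra.
  - replace (S j - 1)%nat with j by lia. pose proof (a_succ_le j); lra.
Qed.

Lemma sum_L1diff n : sum_n_m (L1diff a n) 1 (n - 1) = a O - a (n - 1)%nat.
Proof.
  rewrite (sum_n_m_Rext _ (fun k => (fun j => a (n - j)%nat) (S k) - a (n - k)%nat))
    by (intros k; unfold L1diff; cbv beta; now replace (n - S k)%nat with (n - k - 1)%nat by lia).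
  rewrite (sum_n_m_telescope (fun j => a (n - j)%nat)) by lia.
  replace (n - S (n - 1))%nat with O by lia. reflexivity.
Qed.

Lemma v_mul_L1sum_ge n :
  / 2 * (a O * v n ^ 2 - sum_n_m (fun k => L1diff a n k * v k ^ 2) 1 (n - 1))
  - / 2 * a (n - 1)%nat * v O ^ 2 <= v n * L1sum a v n.
Proof.
  assert (Hsq : 0 <= sum_n_m (fun k => L1diff a n k * (v n - v k) ^ 2) 1 (n - 1)).
  { apply sum_n_m_ge0. intros k. apply Rmult_le_pos; [apply L1diff_ge0 | apply pow2_ge_0]. }
  rewrite (sum_n_m_Rext _ (fun k => v n ^ 2 * L1diff a n k + (-2 * v n) * (L1diff a n k * v k)
                                   + L1diff a n k * v k ^ 2)) in Hsq by (intros; ring).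
  rewrite !sum_n_m_Rplus, !sum_n_m_Rmult_l, sum_L1diff in Hsq.
  assert (0 <= a (n - 1)%nat * (v n - v O) ^ 2) by (apply Rmult_le_pos; [apply a_ge0 | apply pow2_ge_0]).
  unfold L1sum. nra.
Qed.

Lemma sum_L1_quadratic m :
  sum_n_m (fun n => a O * v n ^ 2 - sum_n_m (fun k => L1diff a n k * v k ^ 2) 1 (n - 1)) 1 m
  = sum_n_m (fun n => a (m - n)%nat * v n ^ 2) 1 m.
Proof.
  induction m as [| m IH].
  - rewrite !sum_n_m_zero by lia. reflexivity.
  - destruct m as [| m].
    + rewrite !sum_n_n, sum_n_m_zero by lia. change (a O * v 1%nat ^ 2 - 0 = a O * v 1%nat ^ 2). ring.
    + rewrite sum_n_Sm, IH, (sum_n_Sm (fun n => a (S (S m) - n)%nat * v n ^ 2)) by lia.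
      replace (S (S m) - S (S m))%nat with O by lia.
      replace (S (S m) - 1)%nat with (S m) by lia.
      rewrite (sum_n_m_Rext (fun n => a (S (S m) - n)%nat * v n ^ 2)
                 (fun n => a (S m - n)%nat * v n ^ 2 + -1 * (L1diff a (S (S m)) n * v n ^ 2)))
        by (intros k; unfold L1diff; replace (S (S m) - k - 1)%nat with (S m - k)%nat by lia; ring).
      rewrite sum_n_m_Rplus, sum_n_m_Rmult_l. unfold plus; simpl; ring.
Qed.

Lemma sum_v_mul_L1sum_ge m :
  / 2 * sum_n_m (fun n => a (m - n)%nat * v n ^ 2) 1 m
  - / 2 * sum_n_m (fun n => a (n - 1)%nat) 1 m * v O ^ 2
  <= sum_n_m (fun n => v n * L1sum a v n) 1 m.
Proof.
  rewrite <- sum_L1_quadratic.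
  transitivity (sum_n_m (fun n =>
      / 2 * (a O * v n ^ 2 - sum_n_m (fun k => L1diff a n k * v k ^ 2) 1 (n - 1))
      + (- / 2 * v O ^ 2) * a (n - 1)%nat) 1 m).
  - rewrite sum_n_m_Rplus, !sum_n_m_Rmult_l. right; ring.
  - apply sum_n_m_le; intros n. pose proof (v_mul_L1sum_ge n). lra.
Qed.

End L1Energy.

Section GammaIntegral.

Variable b : R.
Hypothesis Hb : 0 <= b <= 1.

Let f (t : R) : R := Rpower t b * exp (- t).
Let E (t : R) : R := exp (- t / 2).

Lemma Rpower_le_1_add t : 0 < t -> Rpower t b <= 1 + t.
Proof.
  intros Ht. destruct (Rle_dec t 1) as [Ht1 | Ht1].
  - assert (Hle : Rpower t b <= Rpower 1 b) by (apply Rle_Rpower_l; lra).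
    rewrite Rpower_1_l in Hle. lra.
  - assert (Hle : Rpower t b <= Rpower t 1) by (apply Rle_Rpower; lra).
    rewrite Rpower_1 in Hle; lra.
Qed.

Lemma gamma_integrand_continuous t : 0 < t -> continuous f t.
Proof.
  intros Ht. apply (ex_derive_continuous (V := R_NormedModule)). unfold f. apply ex_derive_mult.
  - exists (b * Rpower t (b - 1)). apply is_derive_Reals.
    now apply derivable_pt_lim_power.
  - auto_derive. auto.
Qed.

Lemma ex_RInt_gamma_integrand x y : 0 < x -> 0 < y -> ex_RInt f x y.
Proof.
  intros Hx Hy. apply (@ex_RInt_continuous R_CompleteNormedModule).
  intros z [Hz _]. apply gamma_integrand_continuous.
  eapply Rlt_le_trans; [| exact Hz]. now apply Rmin_glb_lt.
Qed.

Lemma gamma_integrand_ge0 t : 0 <= f t.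
Proof. unfold f, Rpower. pose proof (exp_pos (b * ln t)). pose proof (exp_pos (- t)). nra. Qed.

(* [t^b <= 1 + t < 2 e^(t/2)] *)
Lemma gamma_integrand_le t : 0 < t -> f t <= 2 * E t.
Proof.
  intros Ht. unfold f, E.
  assert (Esplit : exp (- t) = exp (- t / 2) * exp (- t / 2)).
  { rewrite <- exp_plus. f_equal. lra. }
  assert (Einv : exp (t / 2) * exp (- t / 2) = 1).
  { rewrite <- exp_plus, <- exp_0. f_equal. lra. }
  assert (1 + t / 2 < exp (t / 2)) by (apply exp_ineq1; lra).
  pose proof (exp_pos (- t / 2)). pose proof (Rpower_le_1_add t Ht).
  rewrite Esplit. nra.
Qed.

Lemma is_RInt_exp_half x y : is_RInt (fun t => 2 * E t) x y (4 * (E x - E y)).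
Proof.
  replace (4 * (E x - E y)) with (minus (- 4 * E y) (- 4 * E x))
    by (unfold minus, plus, opp; simpl; ring).
  apply (@is_RInt_derive R_CompleteNormedModule (fun t => - 4 * E t)).
  - intros z _. unfold E. auto_derive; [auto | unfold Rdiv; field].
  - intros z _. apply (ex_derive_continuous (V := R_NormedModule)).
    unfold E. auto_derive. auto.
Qed.

Lemma RInt_gamma_integrand_bounds x y :
  0 < x -> x <= y -> 0 <= RInt f x y <= 4 * (E x - E y).
Proof.
  intros Hx Hxy. split.
  - apply RInt_ge_0; auto.
    + apply ex_RInt_gamma_integrand; lra.
    + intros; apply gamma_integrand_ge0.
  - rewrite <- (is_RInt_unique _ _ _ _ (is_RInt_exp_half x y)).
    apply RInt_le; auto.
    + apply ex_RInt_gamma_integrand; lra.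
    + eexists; apply is_RInt_exp_half.
    + intros; apply gamma_integrand_le; lra.
Qed.

Lemma RInt_gamma_integrand_split a c d e : 0 < a -> 0 < c -> 0 < d -> 0 < e ->
  RInt f a e = RInt f a c + RInt f c d + RInt f d e.
Proof.
  intros.
  rewrite <- (RInt_Chasles f a d e), <- (RInt_Chasles f a c d);
    auto using ex_RInt_gamma_integrand.
Qed.

Let FP := filter_prod (at_right 0) (Rbar_locally p_infty).

Lemma gamma_window_eventually d M :
  0 < d -> FP (fun ab => 0 < fst ab < d /\ M < snd ab).
Proof.
  intros Hd. apply (Filter_prod _ _ _ (fun x => 0 < x < d) (fun y => M < y)).
  - exists (mkposreal d Hd). intros y Hy Hy0. simpl.
    apply Rabs_def2 in Hy. unfold minus, plus, opp in Hy; simpl in Hy. lra.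
  - exists M. auto.
  - simpl. auto.
Qed.

Lemma RInt_gamma_integrand_cvg :
  exists l, filterlim (fun ab => RInt f (fst ab) (snd ab)) FP (locally l).
Proof.
  apply (filterlim_locally_cauchy (U := R_CompleteSpace)).
  intros [eps Heps]. simpl.
  (* The two ends then contribute at most [4 (1 - e^(-d/2)) <= 2 d] and [4 e^(-M/2) < 8 / M]. *)
  set (d := eps / 8). set (M := 16 / eps).
  assert (Hd : 0 < d) by (unfold d; lra).
  assert (HM : 0 < M) by (unfold M; apply Rdiv_lt_0_compat; lra).
  exists (fun ab => 0 < fst ab < d /\ M < snd ab).
  split; [now apply gamma_window_eventually |].
  intros [a1 b1] [a2 b2] [[Ha1 Ha1'] Hb1] [[Ha2 Ha2'] Hb2]; simpl in *.
  change (Rabs (RInt f a2 b2 - RInt f a1 b1) < eps).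
  rewrite (RInt_gamma_integrand_split a1 d M b1), (RInt_gamma_integrand_split a2 d M b2)
    by lra.
  destruct (RInt_gamma_integrand_bounds a1 d); try lra.
  destruct (RInt_gamma_integrand_bounds a2 d); try lra.
  destruct (RInt_gamma_integrand_bounds M b1); try lra.
  destruct (RInt_gamma_integrand_bounds M b2); try lra.
  assert (E_le_1 : forall x, 0 <= x -> E x <= 1).
  { intros x Hx. unfold E. rewrite <- exp_0.
    destruct (Rle_lt_or_eq_dec 0 x Hx) as [Hx' | <-].
    - left; apply exp_increasing; lra.
    - right; f_equal; lra. }
  assert (E_gt_0 : forall x, 0 < E x) by (intros; apply exp_pos).
  assert (Ed : 1 - d / 2 <= E d).
  { unfold E. pose proof (exp_ineq1_le (- d / 2)). lra. }
  assert (EM : E M < eps / 8).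
  { unfold E. assert (1 + M / 2 < exp (M / 2)) by (apply exp_ineq1; lra).
    assert (exp (M / 2) * exp (- M / 2) = 1).
    { rewrite <- exp_plus, <- exp_0. f_equal. lra. }
    pose proof (exp_pos (- M / 2)).
    assert (M * eps = 16) by (unfold M; field; lra).
    nra. }
  pose proof (E_le_1 a1); pose proof (E_le_1 a2); pose proof (E_gt_0 b1); pose proof (E_gt_0 b2).
  unfold d in *. apply Rabs_def1; lra.
Qed.

Lemma RInt_gen_gamma_integrand_gt0 :
  0 < RInt_gen f (at_right 0) (Rbar_locally p_infty).
Proof.
  destruct RInt_gamma_integrand_cvg as [l Hl].
  assert (Hint : is_RInt_gen f (at_right 0) (Rbar_locally p_infty) l).
  { refine (filterlimi_lim_ext_loc _ _ _ Hl).
    apply (filter_imp (fun ab => 0 < fst ab < 1 /\ 0 < snd ab)).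
    - intros [a e] [[Ha _] He]; simpl in *.
      apply (RInt_correct (V := R_CompleteNormedModule)).
      now apply ex_RInt_gamma_integrand.
    - apply gamma_window_eventually; lra. }
  rewrite (is_RInt_gen_unique f l Hint).
  assert (Hpos : 0 < RInt f 1 2).
  { apply RInt_gt_0; [lra | | intros; apply gamma_integrand_continuous; lra].
    intros t _. unfold f, Rpower. apply Rmult_lt_0_compat; apply exp_pos. }
  assert (RInt f 1 2 <= l); [| lra].
  apply (closed_filterlim_loc _ (fun u => RInt f 1 2 <= u) _ Hl); [| apply closed_ge].
  apply (filter_imp (fun ab => 0 < fst ab < 1 /\ 2 < snd ab));
    [| apply gamma_window_eventually; lra].
  intros [a e] [[Ha Ha'] He]; simpl in *.
  rewrite (RInt_gamma_integrand_split a 1 2 e) by lra.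
  destruct (RInt_gamma_integrand_bounds a 1); try lra.
  destruct (RInt_gamma_integrand_bounds 2 e); lra.
Qed.

End GammaIntegral.

Lemma Gamma_gt0 s : 1 <= s <= 2 -> 0 < Gamma s.
Proof. intros Hs. apply (RInt_gen_gamma_integrand_gt0 (s - 1)). lra. Qed.

Lemma Rpower_mvt x y b : 0 < x < y ->
  exists c, x <= c <= y /\ Rpower y b - Rpower x b = b * Rpower c (b - 1) * (y - x).
Proof.
  intros Hxy.
  destruct (MVT_gen (fun t => Rpower t b) x y (fun t => b * Rpower t (b - 1)))
    as [c [Hc Hmvt]]; rewrite ?Rmin_left, ?Rmax_right in * by lra.
  - intros t Ht. apply is_derive_Reals, derivable_pt_lim_power. lra.
  - intros t Ht. apply derivable_continuous_pt.
    exists (b * Rpower t (b - 1)). apply derivable_pt_lim_power. lra.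
  - now exists c.
Qed.

Lemma Rpower_increment_succ_le x b : 0 < x -> 0 <= b <= 1 ->
  Rpower (x + 2) b - Rpower (x + 1) b <= Rpower (x + 1) b - Rpower x b.
Proof.
  intros Hx Hb.
  destruct (Rpower_mvt x (x + 1) b) as [c1 [Hc1 ->]]; [lra |].
  destruct (Rpower_mvt (x + 1) (x + 2) b) as [c2 [Hc2 ->]]; [lra |].
  assert (Rpower c2 (b - 1) <= Rpower c1 (b - 1)).
  { replace (b - 1) with (- (1 - b)) by ring. rewrite !Rpower_Ropp.
    apply Rinv_le_contravar; [apply exp_pos | apply Rle_Rpower_l; lra]. }
  nra.
Qed.

Lemma acoef_ge0 alpha k : 0 <= alpha <= 1 -> 0 <= acoef alpha k.
Proof.
  intros Ha. assert (HG : 0 < / Gamma (2 - alpha)) by (apply Rinv_0_lt_compat, Gamma_gt0; lra).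
  destruct k as [| k]; unfold acoef; [lra |].
  apply Rmult_le_pos; [lra |].
  assert (0 < INR (S k)) by (apply lt_0_INR; lia).
  assert (Rpower (INR (S k)) (1 - alpha) <= Rpower (INR (S k) + 1) (1 - alpha))
    by (apply Rle_Rpower_l; lra).
  lra.
Qed.

Lemma acoef_succ_le alpha k : 0 <= alpha <= 1 -> acoef alpha (S k) <= acoef alpha k.
Proof.
  intros Ha. assert (HG : 0 < / Gamma (2 - alpha)) by (apply Rinv_0_lt_compat, Gamma_gt0; lra).
  unfold acoef. destruct k as [| k].
  - rewrite <- (Rmult_1_r (/ Gamma (2 - alpha))) at 2.
    apply Rmult_le_compat_l; [lra |].
    replace (INR 1 + 1) with 2 by (simpl; ring). change (INR 1) with 1.
    rewrite Rpower_1_l.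
    assert (Hle : Rpower 2 (1 - alpha) <= Rpower 2 1) by (apply Rle_Rpower; lra).
    rewrite Rpower_1 in Hle by lra. lra.
  - apply Rmult_le_compat_l; [lra |].
    rewrite (S_INR (S k)).
    replace (INR (S k) + 1 + 1) with (INR (S k) + 2) by ring.
    apply Rpower_increment_succ_le; [apply lt_0_INR; lia | lra].
Qed.

Lemma sum_acoef_pred alpha m : (1 <= m)%nat ->
  sum_n_m (fun n => acoef alpha (n - 1)) 1 m = / Gamma (2 - alpha) * Rpower (INR m) (1 - alpha).
Proof.
  intros Hm. induction m as [| m IH]; [lia |].
  destruct m as [| m].
  - rewrite sum_n_n. simpl. rewrite Rpower_1_l. ring.
  - rewrite sum_n_Sm, IH by lia.
    replace (S (S m) - 1)%nat with (S m) by lia.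
    change (/ Gamma (2 - alpha) * Rpower (INR (S m)) (1 - alpha)
      + / Gamma (2 - alpha) * (Rpower (INR (S m) + 1) (1 - alpha) - Rpower (INR (S m)) (1 - alpha))
      = / Gamma (2 - alpha) * Rpower (INR (S (S m))) (1 - alpha)).
    rewrite (S_INR (S m)). ring.
Qed.

Lemma tau_mul_sum_L1deriv alpha tau v m : 0 < tau ->
  tau * sum_n_m (fun n => v n * L1deriv alpha tau v n) 1 m
  = Rpower tau (1 - alpha) * sum_n_m (fun n => v n * L1sum (acoef alpha) v n) 1 m.
Proof.
  intros Htau.
  rewrite (sum_n_m_Rext _ (fun n => / Rpower tau alpha * (v n * L1sum (acoef alpha) v n)))
    by (intros; unfold L1deriv, L1sum, L1diff; ring).
  rewrite sum_n_m_Rmult_l, <- Rmult_assoc.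
  unfold Rminus. rewrite Rpower_plus, Rpower_1, Rpower_Ropp by exact Htau.
  reflexivity.
Qed.

Theorem lemma7 (alpha tau : R) (v : nat -> R) (m : nat)
  (Halpha : 0 < alpha < 1) (Htau : 0 < tau) (Hm : (1 <= m)%nat) :
  tau * sum_n_m (fun n => v n * L1deriv alpha tau v n) 1 m >=
  / 2 * Rpower tau (1 - alpha) *
    sum_n_m (fun n => acoef alpha (m - n) * (v n) ^ 2) 1 m
  - Rpower (INR m * tau) (1 - alpha) / (2 * Gamma (2 - alpha)) * (v O) ^ 2.
Proof.
  assert (Ha : 0 <= alpha <= 1) by lra.
  pose proof (sum_v_mul_L1sum_ge (acoef alpha) v (fun k => acoef_ge0 alpha k Ha)
                (fun k => acoef_succ_le alpha k Ha) m) as Henergy.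
  rewrite sum_acoef_pred in Henergy by exact Hm.
  assert (Hmpos : 0 < INR m) by (apply lt_0_INR; lia).
  rewrite tau_mul_sum_L1deriv, <- Rpower_mult_distr by assumption.
  assert (HG : 0 < Gamma (2 - alpha)) by (apply Gamma_gt0; lra).
  assert (HT : 0 < Rpower tau (1 - alpha)) by apply exp_pos.
  replace (Rpower (INR m) (1 - alpha) * Rpower tau (1 - alpha) / (2 * Gamma (2 - alpha)))
    with (Rpower tau (1 - alpha) * (/ 2 * (/ Gamma (2 - alpha) * Rpower (INR m) (1 - alpha))))
    by (field; lra).
  apply Rle_ge. nra.
Qed.
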